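(* Let $w$ be a positive integer and let $x$ be an integer with $0\le x\le p-1$ and $x\notin\{1,p-1\}$. If $T_n(x)\equiv x\pmod{p^w}$, then $T'_n(x)\equiv n\pmod{p^w}$ or $T'_n(x)\equiv -n\pmod{p^w}$.
   Context: $p$ is a prime with $p>3$ and $n>1$ is an integer with $\gcd(n,p)=\gcd(n,p^2-1)=1$. $T_n(x)\in\mathbb{Z}[x]$ is the Chebyshev polynomial of the first kind: $T_0=1$, $T_1=x$, $T_d=2xT_{d-1}-T_{d-2}$; $T'_n$ is its derivative. *)

From mathcomp Require Import all_boot all_order all_algebra.
Set Implicit Arguments. Unset Strict Implicit. Unset Printing Implicit Defensive.
Import Order.TTheory GRing.Theory Num.Theory.
Local Open Scope ring_scope.

(* Chebyshev polynomials of the first kind over Z: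
   T_0 = 1, T_1 = X, T_{d+2} = 2 X T_{d+1} - T_d.
   chebT_pair d = (T_d, T_{d+1}). *)
Fixpoint chebT_pair (d : nat) : {poly int} * {poly int} :=
  match d with
  | 0%N => (1, 'X)
  | d'.+1 => let pr := chebT_pair d' in
             (pr.2, 2%:P * 'X * pr.2 - pr.1)
  end.

Definition chebT (d : nat) : {poly int} := (chebT_pair d).1.

(** The derivative of T_n is n U_(n-1), and the Pell identity
    T_n^2 - (X^2 - 1) U_(n-1)^2 = 1 then gives
    (X^2 - 1) T_n'^2 = n^2 (T_n^2 - 1).  At a point with T_n(x) = x mod p^w
    the right-hand side becomes n^2 (x^2 - 1); as x^2 - 1 is prime to p for
    x not congruent to 1 or -1, T_n'(x)^2 = n^2 mod p^w.  Since p does not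
    divide 2n, it cannot divide both T_n'(x) - n and T_n'(x) + n, so p^w
    divides one of them. *)
From mathcomp Require Import all_boot all_order all_algebra.
From mathcomp Require Import ring zify.
Import Order.TTheory GRing.Theory Num.Theory.
Local Open Scope ring_scope.

(* chebTU d = (T_d, U_(d-1)), with U the Chebyshev polynomials of the second
   kind and U_(-1) = 0. *)
Fixpoint chebTU (d : nat) : {poly int} * {poly int} :=
  match d with
  | 0%N => (1, 0)
  | d'.+1 => let: (t, u) := chebTU d' in
             ('X * t + ('X^2 - 1) * u, t + 'X * u)
  end.

Lemma chebT_pairE d : chebT_pair d = ((chebTU d).1, (chebTU d.+1).1).
Proof.
elim: d => [|d IH] /=; first by rewrite mulr1 mulr0 addr0.
rewrite IH /=; case: (chebTU d) => t u /=.
by rewrite polyC_natr; congr pair; ring.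
Qed.

Lemma chebTU_fst d : (chebTU d).1 = chebT d.
Proof. by rewrite /chebT chebT_pairE. Qed.

Lemma deriv_chebTU d :
  ((chebTU d).1)^`() = d%:R * (chebTU d).2 /\
  ('X^2 - 1) * ((chebTU d).2)^`() = d%:R * (chebTU d).1 - 'X * (chebTU d).2.
Proof.
elim: d => [|d] /=; first by rewrite !derivE !mulr0 mul0r subr0.
case: (chebTU d) => t u /= [dt du].
rewrite !derivE dt expr1 subr0 -[d.+1%:R]natr1; split.
  by rewrite du; ring.
transitivity (('X^2 - 1) * (d%:R * u + u) + 'X * (('X^2 - 1) * u^`()));
  by [ring | rewrite du; ring].
Qed.

Lemma chebTU_pell d : (chebTU d).1 ^+ 2 - ('X^2 - 1) * (chebTU d).2 ^+ 2 = 1.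
Proof.
elim: d => [|d] /=; first by rewrite expr1n expr0n /= mulr0 subr0.
by case: (chebTU d) => t u /= pell; rewrite -[in RHS]pell; ring.
Qed.

Lemma chebT_deriv_sqr n :
  ('X^2 - 1) * ((chebT n)^`()) ^+ 2 = n%:R ^+ 2 * (chebT n ^+ 2 - 1).
Proof.
rewrite -chebTU_fst; have [-> _] := deriv_chebTU n.
by rewrite -[X in _ * (_ - X)](chebTU_pell n); ring.
Qed.

Lemma coprimez_pexp (p w : nat) (a : int) :
  prime p -> ~~ (p%:Z %| a)%Z -> coprimez (p ^ w)%:Z a.
Proof. by move=> p_pr pNa; rewrite coprimezE coprimeXl // prime_coprime. Qed.

Lemma prime_ndvdz_sqr_sub1 (p : nat) (x : int) :
  prime p -> 0 <= x -> x <= p%:Z - 1 -> x != 1 -> x != p%:Z - 1 ->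
  ~~ (p%:Z %| x ^+ 2 - 1)%Z.
Proof.
move=> p_pr x_ge0 x_le x_neq1 x_neqp1.
have -> : x ^+ 2 - 1 = (x - 1) * (x + 1) by ring.
rewrite dvdzE abszM Euclid_dvdM // !gtnNdvd //; lia.
Qed.

Lemma eqz_mod_pexp_sqr (p w : nat) (d n : int) :
  prime p -> ~~ (p%:Z %| 2 * n)%Z -> ((p ^ w)%:Z %| d ^+ 2 - n ^+ 2)%Z ->
  (d = n %[mod (p ^ w)%:Z])%Z \/ (d = - n %[mod (p ^ w)%:Z])%Z.
Proof.
move=> p_pr pN2n; rewrite !(rwP eqP) !eqz_mod_dvd opprK.
have -> : d ^+ 2 - n ^+ 2 = (d - n) * (d + n) by ring.
have [pdn | pNdn] := boolP (p%:Z %| d - n)%Z; last first.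
  by rewrite Gauss_dvdzr ?coprimez_pexp //; right.
have pNdn' : ~~ (p%:Z %| d + n)%Z.
  apply: contra pN2n => pdn'.
  have -> : 2 * n = (d + n) - (d - n) by ring.
  exact: rpredB.
by rewrite Gauss_dvdzl ?coprimez_pexp //; left.
Qed.

Theorem lemma4 (p n w : nat) (x : int) :
  prime p -> (3 < p)%N -> (1 < n)%N ->
  coprime n p -> coprime n (p ^ 2 - 1) ->
  (0 < w)%N ->
  0 <= x -> x <= (p%:Z - 1) -> x != 1 -> x != p%:Z - 1 ->
  ((chebT n).[x] = x %[mod (p ^ w)%:Z])%Z ->
  ((chebT n)^`().[x] = n%:Z %[mod (p ^ w)%:Z])%Z \/
  ((chebT n)^`().[x] = - n%:Z %[mod (p ^ w)%:Z])%Z.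
Proof.
move=> p_pr p_gt3 _ n_cop_p _ _ x_ge0 x_le x_neq1 x_neqp1.
rewrite (rwP eqP) eqz_mod_dvd => pw_tx.
have at_x := congr1 (horner^~ x) (chebT_deriv_sqr n).
rewrite !(hornerM, horner_exp, hornerD, hornerN, hornerXn, hornerC, hornerMn, hornerX) in at_x.
set t := (chebT n).[x] in pw_tx at_x; set d := (chebT n)^`().[x] in at_x *.
apply: eqz_mod_pexp_sqr => //.
  rewrite dvdzE abszM Euclid_dvdM // gtnNdvd ?(ltnW p_gt3) //=.
  by rewrite -prime_coprime // coprime_sym.
have factorE : (x ^+ 2 - 1) * (d ^+ 2 - n%:Z ^+ 2) = n%:Z ^+ 2 * (t + x) * (t - x).
  by transitivity ((x ^+ 2 - 1) * d ^+ 2 - n%:Z ^+ 2 * (x ^+ 2 - 1));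
    [ring | rewrite at_x; ring].
have pw_cop : coprimez (p ^ w)%:Z (x ^+ 2 - 1).
  exact/coprimez_pexp/prime_ndvdz_sqr_sub1.
by rewrite -(Gauss_dvdzr _ pw_cop) factorE dvdz_mull.
Qed.
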